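(* Assume $r\ge n^{\kappa}$ for some sufficiently small constant $\kappa>0$ and condition (C1). If $l_n=o(n)$, then $\sup_{\omega\in[-\pi,\pi]}\max_{(i,j)\in\mathcal I}|\mathrm{I}_{i,j}(\omega)-\zeta_{i,j}(\omega)|=O_{\rm p}(l_n^2n^{-1}\log r)$.
   Context: $\{\mathbf x_t\}$ is a $p$-dimensional stationary time series with mean $\boldsymbol\mu$, $\mathring{\mathbf x}_t=\mathbf x_t-\boldsymbol\mu=(\mathring x_{1,t},\dots,\mathring x_{p,t})^\top$, $\boldsymbol\Gamma(k)=\{\gamma_{i,j}(k)\}=\mathrm{Cov}(\mathbf x_{t+k},\mathbf x_t)$, $\iota=\sqrt{-1}$. Observations $\mathbf x_1,\dots,\mathbf x_n$. Flat-top kernel with fixed $c\in(0,1]$: $\mathcal W(u)=1$ for $|u|\le c$, $(|u|-1)/(c-1)$ for $c<|u|\le1$, $0$ otherwise; integer bandwidth $l_n$ with $n>2l_n$. $\tilde{\boldsymbol\Gamma}(k)=n^{-1}\sum_{t=1}^{n-k}\mathring{\mathbf x}_{t+k}\mathring{\mathbf x}_t^\top$ for $k\ge0$ and $n^{-1}\sum_{t=-k+1}^{n}\mathring{\mathbf x}_{t+k}\mathring{\mathbf x}_t^\top$ for $k<0$. $\mathrm I(\omega)=\{\mathrm I_{i,j}(\omega)\}=(2\pi)^{-1}\sum_{k=-l_n}^{l_n}\mathcal W(k/l_n)\{\tilde{\boldsymbol\Gamma}(k)-\frac{n-|k|}{n}\boldsymbol\Gamma(k)\}e^{-\iota k\omega}$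 and $\zeta_{i,j}(\omega)=(2\pi n)^{-1}\sum_{t=l_n+1}^{n-l_n}\sum_{k=-l_n}^{l_n}\mathcal W(k/l_n)\{\mathring x_{i,t+k}\mathring x_{j,t}-\gamma_{i,j}(k)\}e^{-\iota k\omega}$. $\mathcal I\subset[p]^2$, $r=|\mathcal I|$; $p,r,l_n$ may depend on $n$, limits as $n\to\infty$. Condition (C1): there are constants $C_1>0$, $C_2>1$ independent of $n,p$ with $\mathbb E\exp(C_1|x_{j,t}|^2)\le C_2$ for all $t,j$. *)

From HB Require Import structures.
From mathcomp Require Import all_boot all_order all_algebra.
From mathcomp Require Import all_classical all_reals all_analysis.
Import Order.TTheory GRing.Theory Num.Theory.
Import numFieldNormedType.Exports.

Set Implicit Arguments.
Unset Strict Implicit.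
Unset Printing Implicit Defensive.

Local Open Scope ring_scope.

(* Conventions:
   - x n t j  : the j-th coordinate (j in 1..p n) at time t (t : nat) of the
                p_n-dimensional series of the n-th problem; observations are
                t = 1..n.
   - mu n j   : the mean of coordinate j; gam n i j k = gamma_{i,j}(k).
   - Complex numbers are written out through real and imaginary parts,
     e^{-i k w} = cos(k w) - i sin(k w). *)

Section Defs.
Variable R : realType.

Definition flat_top (c u : R) : R :=
  if `|u| <= c then 1
  else if `|u| <= 1 then (`|u| - 1) / (c - 1)
  else 0.

Variable xc : nat -> nat -> R.   (* centred series: xc j t = x_{j,t} - mu_j *)
Variable gam : nat -> nat -> int -> R.
Variables (c : R) (n l : nat).

(* the lagk k ranges over -l..l, enumerated as k = m - l, m < 2l+1 *)
Definition lagk (m : nat) : int := (m%:Z - l%:Z)%R.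

Definition tGamma (i j : nat) (k : int) : R :=
  match k with
  | Posz m => n%:R^-1 * \sum_(1 <= t < (n - m)%N.+1) xc i (t + m)%N * xc j t
  | Negz m' => n%:R^-1 *
      \sum_((m'.+1).+1 <= t < n.+1) xc i (t - m'.+1)%N * xc j t
  end.

Definition Wk (k : int) : R := flat_top c (k%:~R / l%:R).

Definition I_re (i j : nat) (w : R) : R :=
  (2 * pi)^-1 * \sum_(m < (2 * l).+1)
     Wk (lagk m) * (tGamma i j (lagk m)
                   - (n%:R - `|lagk m|%:R) / n%:R * gam i j (lagk m))
     * cos ((lagk m)%:~R * w).
Definition I_im (i j : nat) (w : R) : R :=
  (2 * pi)^-1 * \sum_(m < (2 * l).+1)
     Wk (lagk m) * (tGamma i j (lagk m)
                   - (n%:R - `|lagk m|%:R) / n%:R * gam i j (lagk m))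
     * (- sin ((lagk m)%:~R * w)).

(* time index t + k (t >= l+1 >= -k, so this is a natural number) *)
Definition tshift (t : nat) (k : int) : nat := `|(t%:Z + k)%R|%N.

Definition zeta_re (i j : nat) (w : R) : R :=
  (2 * pi * n%:R)^-1 * \sum_(l.+1 <= t < (n - l)%N.+1) \sum_(m < (2 * l).+1)
     Wk (lagk m) * (xc i (tshift t (lagk m)) * xc j t - gam i j (lagk m))
     * cos ((lagk m)%:~R * w).
Definition zeta_im (i j : nat) (w : R) : R :=
  (2 * pi * n%:R)^-1 * \sum_(l.+1 <= t < (n - l)%N.+1) \sum_(m < (2 * l).+1)
     Wk (lagk m) * (xc i (tshift t (lagk m)) * xc j t - gam i j (lagk m))
     * (- sin ((lagk m)%:~R * w)).

Definition I_zeta_dist (i j : nat) (w : R) : R :=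
  Num.sqrt ((I_re i j w - zeta_re i j w) ^+ 2 + (I_im i j w - zeta_im i j w) ^+ 2).

End Defs.

(* For each lag |k| <= l_n, the statistics I(w) and zeta(w) differ only through
   the at most 2 l_n boundary products x_{i,t+k} x_{j,t} (t <= l_n or t > n - l_n)
   that zeta omits, and the matching centring terms gamma_{i,j}(k).  Hence,
   uniformly in w, |I_{i,j}(w) - zeta_{i,j}(w)| <= 6 l_n^2 / n (B + G), where
   B bounds the products of centred observations and G the autocovariances.
   Under (C1) the means and autocovariances are bounded by constants, and
   P(|x_{j,t}| >= s) <= C_2 exp(-C_1 s^2).  With s^2 = (2 + 1/kappa) log r / C_1,
   a union bound over the 2 r n observations entering the pairs of I shows that
   some |x_{j,t}| exceeds s with probability at most 2 C_2 / r, because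
   n <= r^(1/kappa); off that event B = O(log r). *)

From HB Require Import structures.
From mathcomp Require Import all_boot all_order all_algebra.
From mathcomp Require Import all_classical all_reals all_analysis.
From mathcomp Require Import measurable_realfun.
From mathcomp Require Import zify ring lra.
Import Order.TTheory GRing.Theory Num.Theory.
Import numFieldNormedType.Exports.

Set Implicit Arguments.
Unset Strict Implicit.
Unset Printing Implicit Defensive.

Local Open Scope classical_set_scope.
Local Open Scope ring_scope.

Section EdgeEffect.
Variable R : numDomainType.

Lemma norm_sum_nat_le (f : nat -> R) (B : R) (lo hi : nat) :
  (forall t, (lo <= t < hi)%N -> `|f t| <= B) ->
  `|\sum_(lo <= t < hi) f t| <= (hi - lo)%:R * B.
Proof.
move=> hf; apply: le_trans (ler_norm_sum _ _ _) _.
by rewrite mulr_natl -sumr_const_nat; apply: ler_sum_nat.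
Qed.

Lemma sum_centered_trim (f : nat -> R) (g B : R) (lo a b hi : nat) :
  (lo <= a <= b)%N -> (b <= hi)%N ->
  (forall t, (lo <= t < hi)%N -> `|f t| <= B) ->
  `|\sum_(lo <= t < hi) f t - (hi - lo)%:R * g - \sum_(a <= t < b) (f t - g)|
    <= ((a - lo) + (hi - b))%:R * (B + `|g|).
Proof.
move=> /andP[la ab] bh hf.
have hfg t : (lo <= t < hi)%N -> `|f t - g| <= B + `|g|.
  by move=> ht; apply: le_trans (ler_normB _ _) _; rewrite lerD2r hf.
rewrite mulr_natl -sumr_const_nat -sumrB.
rewrite (big_cat_nat la (leq_trans ab bh)) (big_cat_nat ab bh) /=.
rewrite addrCA (addrC (\sum_(a <= i < b) _)) addrK natrD mulrDl.
apply: le_trans (ler_normD _ _) _.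
by apply: lerD; apply: norm_sum_nat_le => t /andP[t1 t2]; apply: hfg; lia.
Qed.

End EdgeEffect.

Lemma tshift_Posz (t m : nat) : tshift t (Posz m) = (t + m)%N.
Proof. by rewrite /tshift -PoszD absz_nat. Qed.

Lemma tshift_Negz (t m : nat) : (m < t)%N -> tshift t (Negz m) = (t - m.+1)%N.
Proof. by move=> mt; rewrite /tshift NegzE subzn // absz_nat. Qed.

Section LagTerms.
Variable R : realType.
Variables (xc : nat -> nat -> R) (gam : nat -> nat -> int -> R) (n l i j : nat).

Definition zeta_lag (k : int) : R :=
  n%:R^-1 * \sum_(l.+1 <= t < (n - l).+1) (xc i (tshift t k) * xc j t - gam i j k).

Lemma scaled_sum_trim (f : nat -> R) (g B G : R) (lo hi : nat) :
  0 <= B -> `|g| <= G -> (lo <= l.+1 <= (n - l).+1)%N -> ((n - l).+1 <= hi)%N ->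
  ((l.+1 - lo) + (hi - (n - l).+1) <= 2 * l)%N ->
  (forall t, (lo <= t < hi)%N -> `|f t| <= B) ->
  `|n%:R^-1 * \sum_(lo <= t < hi) f t - (hi - lo)%:R / n%:R * g
     - n%:R^-1 * \sum_(l.+1 <= t < (n - l).+1) (f t - g)|
    <= n%:R^-1 * ((2 * l)%:R * (B + G)).
Proof.
move=> B0 gG hrange hhi hedge hf.
have -> : n%:R^-1 * \sum_(lo <= t < hi) f t - (hi - lo)%:R / n%:R * g
    - n%:R^-1 * \sum_(l.+1 <= t < (n - l).+1) (f t - g) =
  n%:R^-1 * (\sum_(lo <= t < hi) f t - (hi - lo)%:R * g
    - \sum_(l.+1 <= t < (n - l).+1) (f t - g)) by ring.
rewrite normrM ger0_norm ?invr_ge0 ?ler0n // ler_wpM2l ?invr_ge0 ?ler0n //.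
apply: le_trans (sum_centered_trim g hrange hhi hf) _.
by apply: ler_pM; rewrite ?ler0n ?ler_nat ?lerD2l ?addr_ge0.
Qed.

Lemma tGamma_sub_zeta_lag (k : int) (B G : R) :
  (2 * l < n)%N -> (`|k| <= l)%N -> 0 <= B -> `|gam i j k| <= G ->
  (forall t t', (0 < t <= n)%N -> (0 < t' <= n)%N -> `|xc i t * xc j t'| <= B) ->
  `|tGamma xc n i j k - (n%:R - (`|k|%N)%:R) / n%:R * gam i j k - zeta_lag k|
    <= n%:R^-1 * ((2 * l)%:R * (B + G)).
Proof.
move=> hn hk B0 hG hB; case: k hk hG => [m|m] /= hk hG.
- have -> : n%:R - m%:R = ((n - m).+1 - 1)%:R :> R by rewrite -natrB; [congr _%:R|]; lia.
  rewrite /zeta_lag; under [in X in _ - X]eq_bigr do rewrite tshift_Posz.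
  apply: (@scaled_sum_trim (fun t => xc i (t + m) * xc j t)) => //; try lia.
  by move=> t ht; apply: hB; lia.
- have -> : n%:R - m.+1%:R = (n.+1 - m.+2)%:R :> R by rewrite -natrB; [congr _%:R|]; lia.
  have shift t : (l.+1 <= t)%N -> tshift t (Negz m) = (t - m.+1)%N.
    by move=> ht; apply: tshift_Negz; lia.
  rewrite /zeta_lag; under [in X in _ - X]eq_big_nat => t /andP[ht _] do rewrite shift //.
  apply: (@scaled_sum_trim (fun t => xc i (t - m.+1) * xc j t)) => //; try lia.
  by move=> t ht; apply: hB; lia.
Qed.

End LagTerms.

Lemma norm_flat_top_le1 (R : realType) (c u : R) : 0 < c <= 1 -> `|flat_top c u| <= 1.
Proof.
move=> /andP[c0 c1]; rewrite /flat_top.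
case: ifPn => [_|]; first by rewrite normr1.
rewrite -ltNge => cu; case: ifPn => [u1|_]; last by rewrite normr0.
have c_lt1 : c < 1 := lt_le_trans cu u1.
rewrite -[c - 1]opprB -[`|u| - 1]opprB invrN mulrNN.
rewrite ger0_norm ?divr_ge0 ?subr_ge0 //.
by rewrite ler_pdivrMr ?subr_gt0 // mul1r lerD2l lerN2 ltW.
Qed.

Lemma sqrt_sqrD_le (R : realType) (a b : R) : Num.sqrt (a ^+ 2 + b ^+ 2) <= `|a| + `|b|.
Proof.
rewrite -[X in _ <= X]ger0_norm ?addr_ge0 // -sqrtr_sqr ler_sqrt ?sqr_ge0 //.
rewrite -[a ^+ 2]real_normK ?num_real // -[b ^+ 2]real_normK ?num_real //.
by rewrite sqrrD lerD2r lerDl mulrn_wge0 // mulr_ge0.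
Qed.

Lemma norm_weighted_sum_sub_le (R : numDomainType) N (W D Z e : 'I_N -> R) (b : R) :
  (forall m, `|W m| <= 1) -> (forall m, `|e m| <= 1) -> (forall m, `|D m - Z m| <= b) ->
  `|\sum_(m < N) W m * D m * e m - \sum_(m < N) W m * Z m * e m| <= N%:R * b.
Proof.
move=> hW he hD; rewrite -sumrB; apply: le_trans (ler_norm_sum _ _ _) _.
have -> : N%:R * b = \sum_(m < N) b by rewrite sumr_const card_ord mulr_natl.
apply: ler_sum => m _.
rewrite -mulrBl -mulrBr !normrM mulrAC -[X in _ <= X]mul1r.
by apply: ler_pM; rewrite ?mulr_ge0 // -[1]mulr1 ler_pM.
Qed.

Lemma abs_lagk_le (l m : nat) : (m < (2 * l).+1)%N -> (`|lagk l m| <= l)%N.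
Proof. by rewrite /lagk; lia. Qed.

Lemma spectral_count_le (R : realType) (n l : nat) (y : R) : 0 <= y ->
  (2 * pi)^-1 * ((2 * l).+1%:R * (n%:R^-1 * ((2 * l)%:R * y)))
    <= 3 * (l%:R ^+ 2 / n%:R * y).
Proof.
move=> y0; have ny0 : 0 <= n%:R^-1 * y by rewrite mulr_ge0 ?invr_ge0.
have -> : (2 * l).+1%:R * (n%:R^-1 * ((2 * l)%:R * y))
    = ((2 * l).+1 * (2 * l))%:R * (n%:R^-1 * y) by rewrite natrM; ring.
have pi_inv_le : (2 * pi : R)^-1 <= 2^-1.
  rewrite lef_pV2 ?posrE ?mulr_gt0 ?pi_gt0 // ler_peMr //.
  by apply: le_trans (pi_ge2 R); rewrite ler1n.
have lags : ((2 * l).+1 * (2 * l))%:R * (n%:R^-1 * y) <= 6 * (l%:R ^+ 2 / n%:R * y).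
  have -> : 6 * (l%:R ^+ 2 / n%:R * y) = (6 * l ^ 2)%:R * (n%:R^-1 * y).
    by rewrite natrM natrX; ring.
  by rewrite ler_wpM2r // ler_nat; nia.
have pi_inv_ge0 : 0 <= (2 * pi : R)^-1 by rewrite invr_ge0 mulr_ge0 ?pi_ge0.
have := ler_pM pi_inv_ge0 (mulr_ge0 (ler0n _ _) ny0) pi_inv_le lags; lra.
Qed.

Section SpectralDifference.
Variable R : realType.
Variables (xc : nat -> nat -> R) (gam : nat -> nat -> int -> R) (c : R) (n l i j : nat).

Lemma zeta_reE w : zeta_re xc gam c n l i j w = (2 * pi)^-1 *
  \sum_(m < (2 * l).+1) Wk c l (lagk l m) * zeta_lag xc gam n l i j (lagk l m)
                        * cos ((lagk l m)%:~R * w).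
Proof.
rewrite /zeta_re exchange_big /= invfM -mulrA mulr_sumr; congr (_ * _).
by apply: eq_bigr => m _; rewrite /zeta_lag -mulr_suml -mulr_sumr; ring.
Qed.

Lemma zeta_imE w : zeta_im xc gam c n l i j w = (2 * pi)^-1 *
  \sum_(m < (2 * l).+1) Wk c l (lagk l m) * zeta_lag xc gam n l i j (lagk l m)
                        * - sin ((lagk l m)%:~R * w).
Proof.
rewrite /zeta_im exchange_big /= invfM -mulrA mulr_sumr; congr (_ * _).
by apply: eq_bigr => m _; rewrite /zeta_lag -mulr_suml -mulr_sumr; ring.
Qed.

Lemma I_zeta_dist_le (w B G : R) :
  0 < c <= 1 -> (2 * l < n)%N -> 0 <= B -> (forall k, `|gam i j k| <= G) ->
  (forall t t', (0 < t <= n)%N -> (0 < t' <= n)%N -> `|xc i t * xc j t'| <= B) ->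
  I_zeta_dist xc gam c n l i j w <= 6 * (l%:R ^+ 2 / n%:R * (B + G)).
Proof.
move=> hc hn B0 hG hB.
have pi_inv_ge0 : 0 <= (2 * pi : R)^-1 by rewrite invr_ge0 mulr_ge0 ?pi_ge0.
have spectral_diff (e : nat -> R) : (forall m, `|e m| <= 1) ->
  `|(2 * pi)^-1 * \sum_(m < (2 * l).+1) Wk c l (lagk l m)
        * (tGamma xc n i j (lagk l m)
           - (n%:R - (`|lagk l m|%N)%:R) / n%:R * gam i j (lagk l m)) * e m
    - (2 * pi)^-1 * \sum_(m < (2 * l).+1) Wk c l (lagk l m)
        * zeta_lag xc gam n l i j (lagk l m) * e m|
  <= 3 * (l%:R ^+ 2 / n%:R * (B + G)).
  move=> he; rewrite -mulrBr normrM ger0_norm //.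
  apply: le_trans (spectral_count_le _ _ _) => //; last first.
    by rewrite addr_ge0 // (le_trans _ (hG 0)).
  rewrite ler_wpM2l //; apply: norm_weighted_sum_sub_le => m.
  - exact: norm_flat_top_le1.
  - exact: he.
  - by apply: tGamma_sub_zeta_lag => //; apply: abs_lagk_le.
have Nsin_le1 m : `|- sin ((lagk l m)%:~R * w)| <= 1 by rewrite normrN sin_max.
have re_le := spectral_diff _ (fun m => cos_max ((lagk l m)%:~R * w)).
have im_le := spectral_diff _ Nsin_le1.
rewrite /I_zeta_dist zeta_reE zeta_imE.
apply: le_trans (sqrt_sqrD_le _ _) (le_trans (lerD re_le im_le) _).
by rewrite -mulrDl -natrD.
Qed.

End SpectralDifference.

Lemma ler_expRM_div (R : realType) (C x : R) : 0 < C -> x <= expR (C * x) / C.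
Proof. by move=> C0; rewrite ler_pdivlMr // mulrC; have := expR_ge1Dx (C * x); lra. Qed.

Lemma norm_le_expR_sq (R : realType) (C y : R) : 0 < C ->
  `|y| <= 1 + expR (C * `|y| ^+ 2) / C.
Proof.
move=> C0; have := ler_expRM_div (`|y| ^+ 2) C0; have := normr_ge0 y; nra.
Qed.

Lemma norm_mul_centered_le (R : realType) (C y z a b : R) : 0 < C ->
  `|(y - a) * (z - b)| <= a ^+ 2 + b ^+ 2 + (expR (C * `|y| ^+ 2) + expR (C * `|z| ^+ 2)) / C.
Proof.
move=> C0; rewrite normrM.
have := ler_expRM_div (`|y| ^+ 2) C0; have := ler_expRM_div (`|z| ^+ 2) C0.
have := real_normK (num_real y); have := real_normK (num_real z).
have := real_normK (num_real (y - a)); have := real_normK (num_real (z - b)).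
have := sqr_ge0 (`|y - a| - `|z - b|); have := sqr_ge0 (y + a); have := sqr_ge0 (z + b).
nra.
Qed.

Section Measure.
Variables (R : realType) (d : measure_display) (T : measurableType d).

Lemma measure_bigsetU_le (mu : {measure set T -> \bar R}) (I : eqType) (s : seq I)
    (F : I -> set T) (b : R) :
  (forall i, measurable (F i)) -> (forall i, i \in s -> (mu (F i) <= b%:E)%E) ->
  (mu (\big[setU/set0]_(i <- s) F i) <= ((size s)%:R * b)%:E)%E.
Proof.
move=> mF; elim: s => [|x s IH] hb; first by rewrite big_nil measure0 mul0r.
rewrite big_cons; apply: le_trans (measureU2 mu (mF x) (bigsetU_measurable _ _)) _ => //.
rewrite /= -add1n natrD mulrDl mul1r EFinD; apply: leeD; first by rewrite hb ?mem_head.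
by apply: IH => i si; rewrite hb // inE si orbT.
Qed.

End Measure.

Section ExpSquareMoment.
Variables (R : realType) (d : measure_display) (T : measurableType d).
Variable P : probability T R.
Variables (C1 C2 : R).
Hypothesis C1_gt0 : 0 < C1.

Lemma measurable_expR_sq (Y : {RV P >-> R}) :
  measurable_fun setT (fun w => expR (C1 * `|Y w| ^+ 2)).
Proof.
apply: measurableT_comp => //; apply: measurable_funM => //.
exact/measurable_funX/measurableT_comp.
Qed.

Lemma measurable_norm_ge (Y : {RV P >-> R}) (s : R) : measurable [set w | s <= `|Y w|].
Proof.
have mY : measurable_fun setT (fun w => `|Y w|) by exact: measurableT_comp.
rewrite (_ : [set w | _] = setT `&` ((fun w => `|Y w|) @^-1` `[s, +oo[)).
  exact: mY measurableT _ (measurable_itv _).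
by rewrite setTI; apply: eq_set => w; rewrite /preimage /= in_itv /= andbT.
Qed.

Lemma integral_le_affine (f h : T -> R) (a b H : R) :
  measurable_fun setT f -> measurable_fun setT h ->
  (forall w, 0 <= f w) -> (forall w, 0 <= h w) -> 0 <= a -> 0 <= b ->
  (forall w, f w <= a + b * h w) -> (\int[P]_w (h w)%:E <= H%:E)%E ->
  (\int[P]_w (f w)%:E <= (a + b * H)%:E)%E.
Proof.
move=> mf mh f0 h0 a0 b0 fh hH.
have mbh : measurable_fun setT (fun w => (b * h w)%:E).
  by apply/measurable_EFinP; apply: measurable_funM.
apply: (@le_trans _ _ (\int[P]_w ((a + b * h w)%:E))%E).
  apply: ge0_le_integral => //.
  - by move=> w _; rewrite lee_fin.
  - exact/measurable_EFinP.
  - by apply/measurable_EFinP; apply: measurable_funD => //; apply: measurable_funM.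
  - by move=> w _; rewrite lee_fin.
under eq_integral do rewrite EFinD.
rewrite ge0_integralD //; last by move=> w _; rewrite lee_fin mulr_ge0.
rewrite integral_cst // [X in (a%:E * X)%E](_ : _ = 1%E) ?mule1; last exact: probability_setT.
rewrite EFinD leeD2l //.
under eq_integral do rewrite EFinM.
rewrite ge0_integralZl //; first by rewrite EFinM lee_wpmul2l ?lee_fin.
- exact/measurable_EFinP.
- by move=> w _; rewrite lee_fin.
Qed.

Lemma norm_mean_le (Y : {RV P >-> R}) (mu : R) :
  ('E_P[Y] = mu%:E)%E -> ('E_P[fun w => expR (C1 * `|Y w| ^+ 2)] <= C2%:E)%E ->
  `|mu| <= 1 + C2 / C1.
Proof.
move=> EY hY; rewrite -lee_fin -abse_EFin -EY expectation.unlock.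
apply: le_trans (le_abse_integral _ _ _) _ => //; first exact/measurable_EFinP.
under eq_integral do rewrite abse_EFin.
rewrite mulrC; apply: integral_le_affine.
- exact: measurableT_comp.
- exact: measurable_expR_sq.
- by [].
- by move=> w; exact: expR_ge0.
- exact: ler01.
- by rewrite invr_ge0 ltW.
- by move=> w; rewrite mulrC; exact: norm_le_expR_sq.
- by move: hY; rewrite expectation.unlock.
Qed.

Lemma norm_covariance_le (Y Z : {RV P >-> R}) (mY mZ g : R) :
  ('E_P[Y] = mY%:E)%E -> ('E_P[Z] = mZ%:E)%E ->
  ('E_P[fun w => expR (C1 * `|Y w| ^+ 2)] <= C2%:E)%E ->
  ('E_P[fun w => expR (C1 * `|Z w| ^+ 2)] <= C2%:E)%E ->
  covariance P Y Z = g%:E -> `|g| <= mY ^+ 2 + mZ ^+ 2 + (C2 + C2) / C1.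
Proof.
move=> EY EZ hY hZ cov.
have mprod : measurable_fun setT (fun w => (Y w - mY) * (Z w - mZ)).
  by apply: measurable_funM; apply: measurable_funB.
rewrite -lee_fin -abse_EFin -cov covariance.unlock EY EZ /= expectation.unlock.
apply: le_trans (le_abse_integral _ _ _) _ => //; first exact/measurable_EFinP.
under eq_integral do rewrite abse_EFin.
rewrite [_ / C1]mulrC.
apply: (integral_le_affine (h := fun w => expR (C1 * `|Y w| ^+ 2) + expR (C1 * `|Z w| ^+ 2))).
- exact: measurableT_comp.
- by apply: measurable_funD; exact: measurable_expR_sq.
- by [].
- by move=> w; rewrite addr_ge0 ?expR_ge0.
- by rewrite addr_ge0 ?sqr_ge0.
- by rewrite invr_ge0 ltW.
- by move=> w; rewrite [_^-1 * _]mulrC; exact: norm_mul_centered_le.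
under eq_integral do rewrite EFinD.
rewrite ge0_integralD //; try exact/measurable_EFinP/measurable_expR_sq.
by rewrite EFinD leeD //; [move: hY | move: hZ]; rewrite expectation.unlock.
Qed.

Lemma tail_le_expR_sq (Y : {RV P >-> R}) (s : R) : 0 < s ->
  ('E_P[fun w => expR (C1 * `|Y w| ^+ 2)] <= C2%:E)%E ->
  (P [set w | (s <= `|Y w|)%R] <= (C2 / expR (C1 * s ^+ 2))%:E)%E.
Proof.
move=> s0 hY.
have mf : measurable_fun setT (fun x : R => expR (C1 * x ^+ 2)).
  by apply: measurableT_comp => //; apply: measurable_funM => //; exact: exprn_measurable.
have incr : {in Num.nneg &, {homo (fun x : R => expR (C1 * x ^+ 2)) : x y / x <= y}}.
  by move=> x y x0 y0 xy; rewrite ler_expR (ler_wpM2l (ltW C1_gt0)) // ler_sqr.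
have := markov Y s0 mf (fun x _ => expR_ge0 _) incr.
have -> : [set x | (s%:E <= `|(Y x)%:E|)%E] = [set w | s <= `|Y w|]%R.
  by apply: eq_set => w; rewrite abse_EFin lee_fin.
by move/le_trans/(_ hY); rewrite [C2 / _]mulrC EFinM lee_pdivlMl ?expR_gt0.
Qed.

End ExpSquareMoment.

Section Thresholds.
Variable R : realType.

Lemma sqrt_threshold_le (a m G Q V : R) : 0 <= a -> 0 <= G -> 1 <= Q -> 0 <= V ->
  6 * (V * ((Num.sqrt (a * Q) + m) ^+ 2 + G)) <= (6 * (2 * a + 2 * m ^+ 2 + G) + 1) * (V * Q).
Proof.
move=> a0 G0 Q1 V0.
have s2 : Num.sqrt (a * Q) ^+ 2 = a * Q by rewrite sqr_sqrtr // mulr_ge0 // (le_trans ler01).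
have : (Num.sqrt (a * Q) + m) ^+ 2 + G <= (2 * a + 2 * m ^+ 2 + G) * Q.
  have := sqr_ge0 (Num.sqrt (a * Q) - m); have := sqr_ge0 m; nra.
move/(ler_wpM2l V0); have := mulr_ge0 V0 (le_trans ler01 Q1); nra.
Qed.

Lemma expR_sqrt_ln (C K r : R) : 0 < C -> 0 <= K -> 1 <= r ->
  expR (C * Num.sqrt (K / C * ln r) ^+ 2) = r `^ K.
Proof.
move=> C0 K0 r1.
rewrite sqr_sqrtr; last by apply: mulr_ge0; [exact: divr_ge0 K0 (ltW C0) | exact: ln_ge0].
by rewrite mulrA mulrCA divff ?gt_eqF // mulr1 mulrC expRM lnK // posrE (lt_le_trans ltr01 r1).
Qed.

Lemma union_tail_le_expR_sq (kappa C2 eps r x : R) : 0 < kappa -> 0 <= C2 -> 0 < eps -> 0 < r ->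
  0 <= x -> x `^ kappa <= r -> 2 * C2 / eps <= r ->
  (r + r) * x * (C2 / r `^ (2 + kappa^-1)) <= eps.
Proof.
move=> k0 C2_ge0 eps0 r0 x0 xr reps.
have y0 : 0 < r `^ kappa^-1 by rewrite powR_gt0.
have x_le : x <= r `^ kappa^-1.
  have kinv0 : 0 <= kappa^-1 by rewrite invr_ge0 ltW.
  have := ge0_ler_powR kinv0 _ _ xr; rewrite -powRrM mulfV ?gt_eqF // powRr1 //.
  by apply; rewrite nnegrE ?powR_ge0 // ltW.
have -> : r `^ (2 + kappa^-1) = r ^+ 2 * r `^ kappa^-1.
  by rewrite powRD ?(gt_eqF r0) ?implybT // powR_mulrn // ltW.
have -> : (r + r) * x * (C2 / (r ^+ 2 * r `^ kappa^-1)) = 2 * C2 / r * (x / r `^ kappa^-1).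
  by field; rewrite !gt_eqF.
apply: le_trans (ler_wpM2l _ (_ : x / r `^ kappa^-1 <= 1)) _.
- by rewrite divr_ge0 ?mulr_ge0 // ltW.
- by rewrite ler_pdivrMr // mul1r.
by rewrite mulr1 ler_pdivrMr // -ler_pdivrMl // mulrC.
Qed.

Lemma powR_eventually_ge (kappa B : R) (u : nat -> R) : 0 < kappa ->
  (forall n, n%:R `^ kappa <= u n) -> \forall n \near \oo, B <= u n.
Proof.
move=> k0 hu; near=> n; apply: le_trans (hu n).
have b0 : 0 <= Num.max B 0 by rewrite le_max lexx orbT.
apply: (@le_trans _ _ (Num.max B 0)); first by rewrite le_max lexx.
have -> : Num.max B 0 = (Num.max B 0 `^ kappa^-1) `^ kappa.
  by rewrite -powRrM mulVf ?gt_eqF // powRr1.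
apply: ge0_ler_powR; rewrite ?nnegrE ?powR_ge0 ?ler0n ?(ltW k0) //.
by near: n; exact: nbhs_infty_ger.
Unshelve. all: by end_near.
Qed.

End Thresholds.

Section ObservedSeries.
Variables (R : realType) (d : measure_display) (T : measurableType d).
Variable P : probability T R.
Variables (p : nat -> nat) (Ind : nat -> seq (nat * nat)).
Variable X : nat -> nat -> nat -> {RV P >-> R}.
Variables (l : nat -> nat) (mu : nat -> nat -> R) (gam : nat -> nat -> nat -> int -> R).
Variables (c C1 C2 : R).
Hypothesis Ind_range : forall n,
  all (fun ij => (0 < ij.1 <= p n)%N && (0 < ij.2 <= p n)%N) (Ind n).
Hypothesis mean_X : forall n t j, (0 < j <= p n)%N -> ('E_P[X n t j] = (mu n j)%:E)%E.
Hypothesis cov_X : forall n i j (t : nat) (k : int), (0 < i <= p n)%N -> (0 < j <= p n)%N ->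
  0 <= t%:Z + k -> covariance P (X n (tshift t k) i) (X n t j) = (gam n i j k)%:E.
Hypotheses (C1_gt0 : 0 < C1) (C2_ge0 : 0 <= C2).
Hypothesis moment_X : forall n t j, (0 < j <= p n)%N ->
  ('E_P[fun w => expR (C1 * `|X n t j w| ^+ 2)] <= C2%:E)%E.

Let mean_bnd := 1 + C2 / C1.
Let cov_bnd := 2 * mean_bnd ^+ 2 + (C2 + C2) / C1.

Lemma cov_bnd_ge0 : 0 <= cov_bnd.
Proof.
by apply: addr_ge0; [rewrite mulr_ge0 ?sqr_ge0 | rewrite divr_ge0 ?addr_ge0 // ltW].
Qed.

Lemma norm_mu_le n j : (0 < j <= p n)%N -> `|mu n j| <= mean_bnd.
Proof. by move=> hj; apply: (norm_mean_le C1_gt0 (mean_X 0 hj) (moment_X 0 hj)). Qed.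

Lemma norm_gam_le n i j k : (0 < i <= p n)%N -> (0 < j <= p n)%N ->
  `|gam n i j k| <= cov_bnd.
Proof.
move=> hi hj; have tk : 0 <= (`|k|%N)%:Z + k by case: k => k; rewrite ?NegzE; lia.
apply: le_trans (norm_covariance_le C1_gt0 (mean_X _ hi) (mean_X _ hj)
  (moment_X _ hi) (moment_X _ hj) (cov_X hi hj tk)) _.
rewrite lerD2r -(real_normK (num_real (mu n i))) -(real_normK (num_real (mu n j))).
have := norm_mu_le hi; have := norm_mu_le hj.
have := normr_ge0 (mu n i); have := normr_ge0 (mu n j); nra.
Qed.

Definition observed (n : nat) : seq (nat * nat) :=
  [seq (t, j) | j <- unzip1 (Ind n) ++ unzip2 (Ind n), t <- iota 1 n].

Definition exceedance (n : nat) (s : R) : set T :=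
  \big[setU/set0]_(a <- observed n) [set w | s <= `|X n a.1 a.2 w|].

Lemma measurable_exceedance n s : measurable (exceedance n s).
Proof. by apply: bigsetU_measurable => a _; exact: measurable_norm_ge. Qed.

Lemma observed_range n a : a \in observed n -> (0 < a.2 <= p n)%N.
Proof.
case/allpairsP => -[j t] [/= + _ ->] /=; rewrite mem_cat => /orP[] /mapP[ij ij_in ->];
  by have /andP[] := allP (Ind_range n) ij ij_in.
Qed.

Lemma P_exceedance_le n s : 0 < s ->
  (P (exceedance n s) <=
     (((size (Ind n) + size (Ind n)) * n)%:R * (C2 / expR (C1 * s ^+ 2)))%:E)%E.
Proof.
move=> s0; have -> : ((size (Ind n) + size (Ind n)) * n)%N = size (observed n).
  by rewrite size_allpairs size_cat !size_map size_iota.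
apply: measure_bigsetU_le => [a|a /observed_range hj]; first exact: measurable_norm_ge.
exact: (tail_le_expR_sq C1_gt0 s0 (moment_X a.1 hj)).
Qed.

Lemma max_I_zeta_dist_le n s w om : 0 < c <= 1 -> (2 * l n < n)%N ->
  ~ exceedance n s w ->
  \big[Num.max/0]_(ij <- Ind n)
     I_zeta_dist (fun j t => X n t j w - mu n j) (gam n) c n (l n) ij.1 ij.2 om
  <= 6 * ((l n)%:R ^+ 2 / n%:R * ((s + mean_bnd) ^+ 2 + cov_bnd)).
Proof.
move=> hc hn nw.
have centered_le t j : (0 < t <= n)%N -> j \in unzip1 (Ind n) ++ unzip2 (Ind n) ->
    `|X n t j w - mu n j| <= s + mean_bnd.
  move=> ht hj; have obs : (t, j) \in observed n.
    by apply: (allpairs_f (fun j t => (t, j))); rewrite // mem_iota; lia.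
  apply: le_trans (ler_normB _ _) (lerD _ (norm_mu_le (observed_range obs))).
  rewrite leNgt; apply/negP => s_lt; apply: nw; rewrite /exceedance -bigcup_seq.
  by exists (t, j) => //; exact: ltW.
rewrite big_seq; apply: bigmax_le => [|ij ij_in].
  by rewrite !mulr_ge0 ?invr_ge0 ?sqr_ge0 // addr_ge0 ?sqr_ge0 ?cov_bnd_ge0.
have /andP[hi hj] := allP (Ind_range n) ij ij_in.
apply: I_zeta_dist_le => //; first exact: sqr_ge0.
  by move=> k; apply: norm_gam_le.
move=> t t' ht ht'; rewrite normrM expr2.
by apply: ler_pM => //; apply: centered_le; rewrite // mem_cat map_f ?orbT.
Qed.

Lemma dist_gt_sub_exceedance n (a : R) : 0 < c <= 1 -> (2 * l n < n)%N -> 0 <= a ->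
  expR 1 <= (size (Ind n))%:R :> R ->
  [set w | exists om : R, - pi <= om <= pi /\
     (6 * (2 * a + 2 * mean_bnd ^+ 2 + cov_bnd) + 1)
       * ((l n)%:R ^+ 2 / n%:R * ln (size (Ind n))%:R) <
     \big[Num.max/0]_(ij <- Ind n)
        I_zeta_dist (fun j t => X n t j w - mu n j) (gam n) c n (l n) ij.1 ij.2 om]
  `<=` exceedance n (Num.sqrt (a * ln (size (Ind n))%:R)).
Proof.
move=> hc hn a0 r_ge_e w [om [_ lt_max]]; apply: contrapT => nw.
move: lt_max; apply/negP; rewrite -leNgt.
apply: le_trans (max_I_zeta_dist_le om hc hn nw) _.
apply: sqrt_threshold_le; rewrite ?cov_bnd_ge0 ?divr_ge0 ?sqr_ge0 //.
by rewrite -[leLHS](expRK 1) ler_ln ?posrE ?expR_gt0 // (lt_le_trans (expR_gt0 1) r_ge_e).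
Qed.

Lemma P_exceedance_le_eps n (kappa eps : R) : 0 < kappa -> 0 < eps ->
  n%:R `^ kappa <= (size (Ind n))%:R -> expR 1 <= (size (Ind n))%:R :> R ->
  2 * C2 / eps <= (size (Ind n))%:R ->
  (P (exceedance n (Num.sqrt ((2 + kappa^-1) / C1 * ln (size (Ind n))%:R))) <= eps%:E)%E.
Proof.
move=> k0 eps0 r_ge r_ge_e r_ge_eps.
have r_gt1 : 1 < (size (Ind n))%:R :> R by apply: lt_le_trans r_ge_e; rewrite expR_gt1.
have K0 : 0 < 2 + kappa^-1 by rewrite addr_gt0 ?invr_gt0.
apply: le_trans (P_exceedance_le n _) _.
  by rewrite sqrtr_gt0 mulr_gt0 ?divr_gt0 ?ln_gt0.
rewrite lee_fin natrM natrD (expR_sqrt_ln C1_gt0 (ltW K0) (ltW r_gt1)).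
by apply: union_tail_le_expR_sq => //; exact: lt_trans ltr01 r_gt1.
Qed.

End ObservedSeries.


Theorem lemmaL2 (R : realType) (d : measure_display) (T : measurableType d)
  (P : probability T R)
  (p l : nat -> nat) (Ind : nat -> seq (nat * nat))
  (X : nat -> nat -> nat -> {RV P >-> R})
  (mu : nat -> nat -> R) (gam : nat -> nat -> nat -> int -> R)
  (c C1 C2 : R) :
  0 < c <= 1 ->
  (forall n, uniq (Ind n) /\
     all (fun ij => (0 < ij.1 <= p n)%N && (0 < ij.2 <= p n)%N) (Ind n)) ->
  (* stationarity: constant mean, covariances depending only on the lag *)
  (forall n t j, (0 < j <= p n)%N -> ('E_P[X n t j] = (mu n j)%:E)%E) ->
  (forall n i j (t : nat) (k : int), (0 < i <= p n)%N -> (0 < j <= p n)%N ->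
     0 <= t%:Z + k ->
     covariance P (X n (tshift t k) i) (X n t j) = (gam n i j k)%:E) ->
  (* condition (C1) *)
  0 < C1 -> 1 < C2 ->
  (forall n t j, (0 < j <= p n)%N ->
     ('E_P[fun w => expR (C1 * `|X n t j w| ^+ 2)] <= C2%:E)%E) ->
  (* r >= n^kappa for some kappa > 0 *)
  (exists kappa : R, 0 < kappa /\
     forall n : nat, n%:R `^ kappa <= (size (Ind n))%:R) ->
  (* n > 2 l_n and l_n = o(n) *)
  (\forall n \near \oo, (2 * l n < n)%N) ->
  (fun n => (l n)%:R / n%:R : R) @ \oo --> 0 ->
  (* conclusion: sup_w max_{(i,j) in I} |I_{i,j}(w) - zeta_{i,j}(w)|
     = O_p(l_n^2 n^{-1} log r)  (outer-probability form) *)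
  forall eps : R, 0 < eps ->
  exists M : R, 0 < M /\
  \forall n \near \oo, exists A : set T, measurable A /\
    [set w | exists om : R, - pi <= om <= pi /\
       M * ((l n)%:R ^+ 2 / n%:R * ln (size (Ind n))%:R) <
       \big[Num.max/0]_(ij <- Ind n)
          I_zeta_dist (fun j t => X n t j w - mu n j) (gam n) c n (l n)
                      ij.1 ij.2 om] `<=` A /\
    (P A <= eps%:E)%E.
Proof.
move=> hc hInd hmu hcov C1_gt0 C2_gt1 hexp [kappa [kappa_gt0 r_ge]] hn _ eps eps_gt0.
have C2_ge0 := ltW (lt_trans ltr01 C2_gt1).
have Ind_range n := proj2 (hInd n).
set a := (2 + kappa^-1) / C1.
have a_ge0 : 0 <= a by rewrite divr_ge0 ?addr_ge0 ?invr_ge0 ?ltW.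
exists (6 * (2 * a + 2 * (1 + C2 / C1) ^+ 2 + (2 * (1 + C2 / C1) ^+ 2 + (C2 + C2) / C1)) + 1).
split; first by have := cov_bnd_ge0 C1_gt0 C2_ge0; have := sqr_ge0 (1 + C2 / C1); lra.
have r_large := powR_eventually_ge (Num.max (expR 1) (2 * C2 / eps)) kappa_gt0 r_ge.
apply: filterS2 hn r_large => n n_gt; rewrite ge_max => /andP[r_ge_e r_ge_eps].
exists (exceedance Ind X n (Num.sqrt (a * ln (size (Ind n))%:R))).
split; first exact: measurable_exceedance.
split; first exact: (dist_gt_sub_exceedance Ind_range hmu hcov C1_gt0 C2_ge0 hexp hc n_gt).
exact: (P_exceedance_le_eps Ind_range C1_gt0 C2_ge0 hexp kappa_gt0 eps_gt0).
Qed.
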